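(* For all real $\alpha,\beta$ with $\beta\neq0$, all integers $n,m\ge0$ and every real $x$, \[ P_{n+m}^{(\alpha,\beta)}(x)=\sum_{j=0}^{n}\sum_{k=0}^{m}\binom{n}{j}\langle m-\beta k\rangle_{n-j}\,S_{\alpha,\beta}(m,k)\,x^kP_j^{(\alpha,\beta)}(x). \] In particular (case $m=1$), \[ P_{n+1}^{(\alpha,\beta)}(x)=-\sum_{j=0}^{n}\binom{n}{j}\Big(\alpha\,(n-j)!+\beta x\,\langle1-\beta\rangle_{n-j}\Big)P_j^{(\alpha,\beta)}(x). \]
   Context: For real $a$ and integer $n\ge 1$, $\langle a\rangle_n:=a(a+1)\cdots(a+n-1)$ and $\langle a\rangle_0:=1$. For real $\alpha,\beta$ and integers $0\le k\le n$, $S_{\alpha,\beta}(n,k):=\frac{1}{k!}\sum_{j=0}^{k}(-1)^{k-j}\binom{k}{j}\langle-\alpha-\beta j\rangle_n$. For real $\alpha,\beta$ with $\beta\neq0$, the polynomials $P_n^{(\alpha,\beta)}(x)$ are defined by $\sum_{n\ge0}P_n^{(\alpha,\beta)}(x)\frac{t^n}{n!}=(1-t)^{\alpha}\exp\big(x((1-t)^{\beta}-1)\big)$ (formal power series in $t$). *)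

From HB Require Import structures.
From mathcomp Require Import all_boot all_order all_algebra.
Set Implicit Arguments. Unset Strict Implicit. Unset Printing Implicit Defensive.
Import Order.TTheory GRing.Theory Num.Theory.
Local Open Scope ring_scope.

Section Defs.
Variable R : realFieldType.

Definition rising (a : R) (n : nat) : R := \prod_(i < n) (a + i%:R).

Definition Sab (al be : R) (n k : nat) : R :=
  (k`!%:R)^-1 * \sum_(j < k.+1)
     (-1) ^+ (k - j) * 'C(k, j)%:R * rising (- al - be * j%:R) n.

Definition fps := nat -> R.

Definition fps_one : fps := fun n => (n == 0%N)%:R.

Definition fps_mul (f g : fps) : fps :=
  fun n => \sum_(i < n.+1) f i * g (n - i)%N.

Definition fps_pow (f : fps) (k : nat) : fps := iter k (fps_mul f) fps_one.

(* exp of a series f with f 0 = 0: exp f = sum_k f^k / k!;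
   the coefficient of t^n only receives contributions from k <= n. *)
Definition fps_exp (f : fps) : fps :=
  fun n => \sum_(k < n.+1) fps_pow f k n / k`!%:R.

Definition gbinom (a : R) (n : nat) : R :=
  (\prod_(i < n) (a - i%:R)) / n`!%:R.

(* (1 - t)^a = sum_n binom(a,n) (-t)^n  (Newton's binomial series) *)
Definition fps_1mt_pow (a : R) : fps := fun n => (-1) ^+ n * gbinom a n.

Definition Pgen (al be x : R) : fps :=
  fps_mul (fps_1mt_pow al)
          (fps_exp (fun n => x * (fps_1mt_pow be n - fps_one n))).

Definition Pab (al be : R) (n : nat) (x : R) : R := n`!%:R * Pgen al be x n.

End Defs.

(* Pass to exponential generating functions: P_n(x) is the binomial
   convolution of the sequence of exp(x((1-t)^beta - 1)) with <-alpha>_n, the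
   sequence of (1-t)^alpha.  The logarithmic derivative of the generating
   function, -alpha/(1-t) - beta x (1-t)^(beta-1), gives the case m = 1.  The
   general case follows by induction on m: convolving with a rising factorial
   <c>_n shifts c, by the Chu-Vandermonde identity, and the coefficients
   S(m,k) obey S(m+1,k+1) = (m - beta(k+1) - alpha) S(m,k+1) - beta S(m,k). *)
From HB Require Import structures.
From mathcomp Require Import all_boot all_order all_algebra.
From mathcomp Require Import ring zify.
From Stdlib Require Import FunctionalExtensionality.
Set Implicit Arguments. Unset Strict Implicit. Unset Printing Implicit Defensive.
Import Order.TTheory GRing.Theory Num.Theory.
Local Open Scope ring_scope.

Section BinomialConvolution.
Variable R : comPzRingType.
Implicit Types (a b c : nat -> R).

Definition bconv a b : nat -> R :=
  fun n => \sum_(j < n.+1) 'C(n, j)%:R * a (n - j)%N * b j.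

Definition shift a : nat -> R := fun n => a n.+1.

Lemma bconv0 a b : bconv a b 0 = a 0%N * b 0%N.
Proof. by rewrite /bconv big_ord_recl big_ord0 addr0 /= mul1r. Qed.

(* Leibniz rule: [shift] is the derivative of exponential generating functions. *)
Lemma bconvS a b n : bconv a b n.+1 = bconv (shift a) b n + bconv a (shift b) n.
Proof.
rewrite /bconv big_ord_recl /= bin0 subn0 mul1r.
under eq_bigr => i _ do rewrite binS subSS natrD mulrDl mulrDl.
rewrite big_split /= addrA; congr (_ + _).
rewrite big_ord_recr /= bin_small // mul0r mul0r addr0.
rewrite [in RHS]big_ord_recl /= bin0 subn0 mul1r; congr (_ + _).
by apply: eq_bigr => i _; rewrite /shift subnSK.
Qed.

Lemma shift_bconv a b : shift (bconv a b) = fun n => bconv (shift a) b n + bconv a (shift b) n.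
Proof. by apply: functional_extensionality => n; rewrite /shift bconvS. Qed.

Lemma eq_bconvl a a' b n : (forall i, (i <= n)%N -> a i = a' i) ->
  bconv a b n = bconv a' b n.
Proof. by move=> eq_a; apply: eq_bigr => i _; rewrite eq_a // leq_subr. Qed.

Lemma bconvC a b n : bconv a b n = bconv b a n.
Proof.
elim: n a b => [|n IH] a b; first by rewrite !bconv0 mulrC.
by rewrite !bconvS IH [bconv a _ _]IH addrC.
Qed.

Lemma eq_bconvr a b b' n : (forall i, (i <= n)%N -> b i = b' i) ->
  bconv a b n = bconv a b' n.
Proof. by move=> eq_b; rewrite bconvC (eq_bconvl _ eq_b) bconvC. Qed.

Lemma bconvDl a a' b n :
  bconv (fun i => a i + a' i) b n = bconv a b n + bconv a' b n.
Proof. by rewrite /bconv -big_split /=; apply: eq_bigr => i _; ring. Qed.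

Lemma bconvDr a b b' n :
  bconv a (fun i => b i + b' i) n = bconv a b n + bconv a b' n.
Proof. by rewrite bconvC bconvDl !(bconvC _ a). Qed.

Lemma bconvZl (k : R) a b n : bconv (fun i => k * a i) b n = k * bconv a b n.
Proof. by rewrite /bconv mulr_sumr; apply: eq_bigr => i _; ring. Qed.

Lemma bconvZr (k : R) a b n : bconv a (fun i => k * b i) n = k * bconv a b n.
Proof. by rewrite bconvC bconvZl bconvC. Qed.

Lemma bconv_suml (N : nat) (f : nat -> nat -> R) b n :
  bconv (fun i => \sum_(k < N) f k i) b n = \sum_(k < N) bconv (f k) b n.
Proof.
rewrite /bconv; under eq_bigr do rewrite mulr_sumr mulr_suml.
by rewrite exchange_big /=; apply: eq_bigr => k _; apply: eq_bigr => i _; ring.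
Qed.

Lemma bconvA a b c n : bconv (bconv a b) c n = bconv a (bconv b c) n.
Proof.
elim: n a b c => [|n IH] a b c; first by rewrite !bconv0 mulrA.
rewrite !bconvS !shift_bconv bconvDl bconvDr !IH -addrA.
by congr (_ + _); rewrite bconvS addrA.
Qed.

Lemma bconvAC a b c n : bconv (bconv a b) c n = bconv (bconv a c) b n.
Proof.
rewrite !bconvA; apply: eq_bconvr => i _; exact: bconvC.
Qed.

Lemma bconvCA a b c n : bconv a (bconv b c) n = bconv (bconv a c) b n.
Proof. by rewrite -bconvA bconvAC. Qed.

End BinomialConvolution.

Section RisingFactorial.
Variable R : realFieldType.

Lemma rising0 (a : R) : rising a 0 = 1.
Proof. by rewrite /rising big_ord0. Qed.

Lemma risingS (a : R) n : rising a n.+1 = a * rising (a + 1) n.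
Proof.
rewrite /rising big_ord_recl /= addr0; congr (_ * _).
by apply: eq_bigr => i _; rewrite /bump /= natrD; ring.
Qed.

Lemma risingSr (a : R) n : rising a n.+1 = rising a n * (a + n%:R).
Proof. by rewrite /rising big_ord_recr. Qed.

Lemma shift_rising (a : R) : shift (rising a) = fun n => a * rising (a + 1) n.
Proof. by apply: functional_extensionality => n; rewrite /shift risingS. Qed.

Lemma rising_0 n : rising (0 : R) n = (n == 0)%:R.
Proof. by case: n => [|n]; rewrite ?rising0 // risingS mul0r. Qed.

Lemma rising_1 n : rising (1 : R) n = n`!%:R.
Proof.
elim: n => [|n IH]; first by rewrite rising0.
by rewrite risingSr IH factS natrM mulrC -natr1 addrC.
Qed.

(* Chu-Vandermonde: (1-t)^(-a) (1-t)^(-b) = (1-t)^(-a-b). *)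
Lemma bconv_rising (a b : R) : bconv (rising a) (rising b) = rising (a + b).
Proof.
apply: functional_extensionality => n.
elim: n a b => [|n IH] a b; first by rewrite bconv0 !rising0 mulr1.
rewrite bconvS !shift_rising bconvZl bconvZr !IH risingS.
by rewrite [a + 1 + b]addrAC addrA; ring.
Qed.

Lemma bconv_rising0l (a : nat -> R) n : bconv (rising 0) a n = a n.
Proof.
elim: n a => [|n IH] a; first by rewrite bconv0 rising0 mul1r.
by rewrite bconvS shift_rising bconvZl mul0r add0r IH.
Qed.

End RisingFactorial.

Section ExponentialGeneratingFunctions.
Variable R : realFieldType.

Definition egf (f : fps R) : nat -> R := fun n => n`!%:R * f n.

Lemma natr_fact_neq0 n : (n`!%:R : R) != 0.
Proof. by rewrite pnatr_eq0 -lt0n fact_gt0. Qed.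

Lemma egf_mul f g n : egf (fps_mul f g) n = bconv (egf g) (egf f) n.
Proof.
rewrite /egf /fps_mul /bconv mulr_sumr; apply: eq_bigr => i _.
have le_in : (i <= n)%N by rewrite -ltnS.
by rewrite -(bin_fact le_in) !natrM; ring.
Qed.

Lemma egf_one n : egf (@fps_one R) n = rising 0 n.
Proof. by rewrite rising_0 /egf /fps_one; case: n => [|n] /=; rewrite ?mul1r ?mulr0. Qed.

Lemma prodrN_sub (c : R) n :
  \prod_(i < n) (- c + i%:R) = (-1) ^+ n * \prod_(i < n) (c - i%:R).
Proof.
elim: n => [|n IH]; first by rewrite !big_ord0 mulr1.
by rewrite !big_ord_recr /= IH exprS; ring.
Qed.

Lemma egf_1mt_pow (c : R) n : egf (fps_1mt_pow c) n = rising (- c) n.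
Proof.
rewrite /egf /fps_1mt_pow /gbinom /rising prodrN_sub.
by field; exact: natr_fact_neq0.
Qed.

Definition bpow (F : nat -> R) (k : nat) : nat -> R :=
  iter k (fun g => bconv g F) (rising 0).

Definition bexp (F : nat -> R) : nat -> R :=
  fun n => \sum_(k < n.+1) bpow F k n / k`!%:R.

Lemma egf_pow f k n : egf (fps_pow f k) n = bpow (egf f) k n.
Proof.
elim: k n => [|k IH] n; first exact: egf_one.
by rewrite /= egf_mul; apply: eq_bconvl => i _; exact: IH.
Qed.

Lemma bpow_small F k n : F 0%N = 0 -> (n < k)%N -> bpow F k n = 0.
Proof.
move=> F0; elim: k n => [|k IH] n //= lt_nk.
rewrite /bconv big1 // => j _.
move: (ltn_ord j); case: (nat_of_ord j) => [|j'] lt_j; first by rewrite F0 mulr0.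
by rewrite IH ?mulr0 ?mul0r //; lia.
Qed.

(* (F^(k+1))' = (k+1) F^k F' *)
Lemma shift_bpowS F k n : bpow F k.+1 n.+1 = k.+1%:R * bconv (bpow F k) (shift F) n.
Proof.
elim: k n => [|k IH] n.
  by rewrite /= bconvS bconv_rising0l shift_rising bconvZl mul0r add0r mul1r.
rewrite [bpow F k.+2]/= bconvS.
rewrite (eq_bconvl (a' := fun i => k.+1%:R * bconv (bpow F k) (shift F) i)) => [|i _];
  last exact: IH.
rewrite bconvZl bconvAC -[(k.+2)%:R]natr1; ring.
Qed.

Lemma bexp_widen F n N : F 0%N = 0 -> (n <= N)%N ->
  bexp F n = \sum_(k < N.+1) bpow F k n / k`!%:R.
Proof.
move=> F0 le_nN; rewrite /bexp (big_ord_widen N.+1 (fun k => bpow F k n / k`!%:R)) //.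
rewrite [RHS](bigID (fun k : 'I__ => (k < n.+1)%N)) /= [X in _ = _ + X]big1 ?addr0 //.
by move=> k; rewrite -leqNgt => lt_nk; rewrite bpow_small ?mul0r.
Qed.

(* (exp F)' = exp F * F' *)
Lemma shift_bexp F n : F 0%N = 0 -> bexp F n.+1 = bconv (bexp F) (shift F) n.
Proof.
move=> F0; rewrite /bexp big_ord_recl [bpow F 0 _]/= rising_0 mul0r add0r.
under eq_bigr => k _ do rewrite lift0 shift_bpowS factS natrM invfM.
rewrite (eq_bconvl (a' := fun i => \sum_(k < n.+1) bpow F k i / k`!%:R)) => [|i le_in];
  last exact: bexp_widen.
rewrite (bconv_suml _ (fun k i => bpow F k i / k`!%:R)); apply: eq_bigr => k _.
rewrite [RHS](eq_bconvl (a' := fun i => k`!%:R^-1 * bpow F k i)) => [|i _]; last exact: mulrC.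
rewrite bconvZl; field.
by rewrite natr_fact_neq0 /= addrC natr1 pnatr_eq0.
Qed.

End ExponentialGeneratingFunctions.

Section CoefficientsS.
Variables (R : realFieldType) (al be : R).

Definition Sab_sum (k m : nat) : R :=
  \sum_(j < k.+1) (-1) ^+ (k - j) * 'C(k, j)%:R * rising (- al - be * j%:R) m.

Lemma Sab_sumSS k m : Sab_sum k.+1 m.+1 =
  (m%:R - be * k.+1%:R - al) * Sab_sum k.+1 m - be * k.+1%:R * Sab_sum k m.
Proof.
have -> : Sab_sum k m =
    \sum_(j < k.+2) (-1) ^+ (k - j) * 'C(k, j)%:R * rising (- al - be * j%:R) m.
  by rewrite [in RHS]big_ord_recr /= bin_small // mulr0 mul0r addr0.
rewrite /Sab_sum !mulr_sumr -sumrB; apply: eq_bigr => j _.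
have lt_jk2 := ltn_ord j; rewrite risingSr.
have [lt_jk1 | ge_jk1] := ltnP j k.+1; last first.
  have -> : nat_of_ord j = k.+1 by apply/eqP; rewrite eqn_leq ge_jk1 -ltnS lt_jk2.
  by rewrite subnn (bin_small (ltnSn k)) binn; ring.
rewrite subSn // exprS.
have binC : (k.+1%:R - j%:R) * 'C(k.+1, j)%:R = k.+1%:R * 'C(k, j)%:R :> R.
  by rewrite -natrB 1?ltnW // -!natrM -mul_bin_down.
apply/eqP; rewrite -subr_eq0; apply/eqP.
transitivity (- (be * (-1) ^+ (k - j) * rising (- al - be * j%:R) m *
   ((k.+1%:R - j%:R) * 'C(k.+1, j)%:R - k.+1%:R * 'C(k, j)%:R))); first ring.
by rewrite binC subrr mulr0 oppr0.
Qed.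

Lemma SabSS m k : Sab al be m.+1 k.+1 =
  (m%:R - be * k.+1%:R - al) * Sab al be m k.+1 - be * Sab al be m k.
Proof.
rewrite /Sab -!/(Sab_sum _ _) Sab_sumSS factS natrM.
by field; rewrite natr_fact_neq0 /= addrC natr1 pnatr_eq0.
Qed.

Lemma SabS0 m : Sab al be m.+1 0 = (m%:R - al) * Sab al be m 0.
Proof. by rewrite /Sab !big_ord1 /= risingSr; ring. Qed.

Lemma Sab_small m k : (m < k)%N -> Sab al be m k = 0.
Proof.
elim: m k => [|m IH] [|k] //= lt_mk; last first.
  by rewrite SabSS !IH ?mulr0 ?subrr // ltnW.
rewrite /Sab.
have -> : \sum_(j < k.+2)
    (-1) ^+ (k.+1 - j) * 'C(k.+1, j)%:R * rising (- al - be * j%:R) 0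
    = ((-1) + 1) ^+ k.+1 :> R.
  by rewrite exprDn; apply: eq_bigr => j _; rewrite rising0 expr1n !mulr1 mulr_natr.
by rewrite addNr expr0n mulr0.
Qed.

Lemma sum_SabS m (x : R) (W : nat -> R) :
  \sum_(k < m.+2) Sab al be m.+1 k * x ^+ k * W k =
  \sum_(k < m.+1) Sab al be m k * x ^+ k
                  * ((m%:R - be * k%:R - al) * W k - be * x * W k.+1).
Proof.
pose A k := Sab al be m k * x ^+ k * (m%:R - be * k%:R - al) * W k.
pose B k := Sab al be m k * x ^+ k.+1 * W k.+1.
have -> : \sum_(k < m.+1) Sab al be m k * x ^+ k
            * ((m%:R - be * k%:R - al) * W k - be * x * W k.+1)
          = \sum_(k < m.+1) A k - be * \sum_(k < m.+1) B k.
  by rewrite mulr_sumr -sumrB; apply: eq_bigr => k _; rewrite /A /B exprS; ring.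
have -> : \sum_(k < m.+1) A k = \sum_(k < m.+2) A k.
  by rewrite [in RHS]big_ord_recr /= /A Sab_small // !mul0r addr0.
rewrite big_ord_recl [in RHS]big_ord_recl mulr_sumr -addrA -sumrB.
congr (_ + _); first by rewrite /A SabS0 expr0 mulr0 subr0; ring.
by apply: eq_bigr => k _; rewrite lift0 SabSS /A /B; ring.
Qed.

End CoefficientsS.

Section PolynomialsP.
Variables (R : realFieldType) (al be x : R).

Definition Pexponent : nat -> R := fun n => x * (rising (- be) n - rising 0 n).

Definition Pseq : nat -> R := bconv (bexp Pexponent) (rising (- al)).

Lemma Pab_Pseq n : Pab al be n x = Pseq n.
Proof.
have egf_exponent :
    egf (fun n => x * (fps_1mt_pow be n - @fps_one R n)) = Pexponent.
  apply: functional_extensionality => i.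
  by rewrite /Pexponent -egf_1mt_pow -egf_one /egf; ring.
rewrite /Pab /Pgen -/(egf _ n) egf_mul /Pseq.
rewrite (eq_bconvr _ (b' := rising (- al))) => [|i _]; last exact: egf_1mt_pow.
apply: eq_bconvl => i _.
rewrite /egf /fps_exp /bexp mulr_sumr; apply: eq_bigr => k _.
by rewrite mulrA -/(egf _ i) egf_pow egf_exponent.
Qed.

Lemma shift_Pexponent n : shift Pexponent n = - be * x * rising (1 - be) n.
Proof. by rewrite /shift /Pexponent !risingS mul0r subr0 addrC; ring. Qed.

(* G'/G = -alpha/(1-t) - beta x (1-t)^(beta-1) for the generating function G. *)
Lemma PseqS n : Pseq n.+1 =
  - be * x * bconv Pseq (rising (1 - be)) n + - al * bconv Pseq (rising 1) n.
Proof.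
have Pexponent0 : Pexponent 0%N = 0 by rewrite /Pexponent !rising0 subrr mulr0.
rewrite /Pseq bconvS shift_rising bconvZr.
rewrite (eq_bconvl (a' := bconv (bexp Pexponent) (shift Pexponent))) => [|i _];
  last exact: shift_bexp.
rewrite bconvAC -/Pseq (eq_bconvr _ (fun i _ => shift_Pexponent i)) bconvZr.
by rewrite -bconv_rising -bconvA.
Qed.

Lemma bconv_rising_PseqS (c : R) n : bconv (rising c) Pseq n.+1 =
  (c - al) * bconv (rising (c + 1)) Pseq n - be * x * bconv (rising (c + 1 - be)) Pseq n.
Proof.
rewrite bconvS shift_rising bconvZl (eq_bconvr _ (fun i _ => PseqS i)) bconvDr !bconvZr.
rewrite !(bconvCA (rising c) Pseq).
by rewrite !bconv_rising [c + (1 - be)]addrA; ring.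
Qed.

Lemma Pseq_addn n m : Pseq (n + m) =
  \sum_(k < m.+1) Sab al be m k * x ^+ k * bconv (rising (m%:R - be * k%:R)) Pseq n.
Proof.
elim: m n => [|m IH] n.
  rewrite big_ord1 addn0 mulr0 subr0 bconv_rising0l /Sab big_ord1 /=.
  by rewrite rising0 expr0 invr1 subnn expr0 bin0 !mulr1 !mul1r.
rewrite addnS -addSn IH.
rewrite (sum_SabS al be m x (fun k => bconv (rising (m.+1%:R - be * k%:R)) Pseq n)).
apply: eq_bigr => k _; congr (_ * _).
rewrite bconv_rising_PseqS -[m.+1%:R]natr1 -[k.+1%:R]natr1.
by congr (_ * bconv (rising _) _ _ - _ * bconv (rising _) _ _); ring.
Qed.

End PolynomialsP.

Theorem mainTheorem12 (R : realFieldType) (al be : R) (hbe : be != 0) :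
  (forall (n m : nat) (x : R),
     Pab al be (n + m) x =
     \sum_(j < n.+1) \sum_(k < m.+1)
        'C(n, j)%:R * rising (m%:R - be * k%:R) (n - j)
        * Sab al be m k * x ^+ k * Pab al be j x)
  /\
  (forall (n : nat) (x : R),
     Pab al be n.+1 x =
     - \sum_(j < n.+1)
        'C(n, j)%:R * (al * (n - j)`!%:R + be * x * rising (1 - be) (n - j))
        * Pab al be j x).
Proof.
split=> [n m x | n x].
  rewrite Pab_Pseq Pseq_addn exchange_big /=.
  apply: eq_bigr => k _; rewrite /bconv mulr_sumr; apply: eq_bigr => j _.
  by rewrite Pab_Pseq; ring.
rewrite Pab_Pseq PseqS !(bconvC (Pseq _ _ _)) /bconv !mulr_sumr -big_split -sumrN /=.
by apply: eq_bigr => j _; rewrite Pab_Pseq rising_1; ring.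
Qed.
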